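(* Let $\gamma$ be the Euler–Mascheroni constant and $\lambda(s)=\sum_{n\ge0}(2n+1)^{-s}$ (for real $s>1$). Then $$-\lim_{x\to\infty}\left\{\Gamma(\lambda(x)-1)-3^x+\Bigl(\frac95\Bigr)^x+\Bigl(\frac97\Bigr)^x-\Bigl(\frac{27}{25}\Bigr)^x+1\right\}=\gamma .$$
   Context: $\Gamma$ is Euler's Gamma function. *)

From Stdlib Require Import Reals.
From Coquelicot Require Import Coquelicot.
Open Scope R_scope.

Definition Gamma (z : R) : R :=
  RInt_gen (fun t => Rpower t (z - 1) * exp (- t))
           (at_right 0) (Rbar_locally p_infty).

Definition euler_gamma : R :=
  real (Lim_seq (fun n => sum_n_m (fun k => / INR k) 1 n - ln (INR n))).

Definition dirichlet_lambda (s : R) : R :=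
  Series (fun n => / Rpower (2 * INR n + 1) s).

From Stdlib Require Import Reals Lra Lia Psatz.
From Coquelicot Require Import Coquelicot.
Open Scope R_scope.

(* Near 0, Gamma(e) = 1/e - gamma + O(e).  On (0, 1) compare t^(e-1) e^(-t) with t^(e-1),
   whose integral is 1/e; on (0, N) use the kernel (1 - (1 - t/N)^N)/t, whose integral is the
   harmonic number H_N and which is close to 1/t on (1, N).  Each of the resulting error
   integrals is nonnegative and O(e + 1/N), so 0 <= Gamma(e) - 1/e + H_N - ln N <= 2e + 3/N.
   Letting e -> 0 shows that H_N - ln N is Cauchy, and then N -> oo gives
   0 <= Gamma(e) - 1/e + gamma <= 2e.
   At the other end, lambda(x) - 1 = 3^-x + 5^-x + 7^-x + 9^-x + O(11^-x), and expanding
   1/(lambda(x) - 1) in the small ratios gives 3^x - (9/5)^x - (9/7)^x + (27/25)^x - 1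
   + O((9/11)^x).  Composing the two expansions proves the theorem. *)

Lemma exp_pow_nat (x : R) (n : nat) : exp x ^ n = exp (INR n * x).
Proof.
induction n as [|n IH].
- simpl. rewrite Rmult_0_l, exp_0. reflexivity.
- rewrite S_INR, <- tech_pow_Rmult, IH, <- exp_plus. f_equal. ring.
Qed.

Lemma Bernoulli_ineq (x : R) (n : nat) : -1 <= x -> 1 + INR n * x <= (1 + x) ^ n.
Proof.
intros Hx. induction n as [|n IH]; [simpl; lra|].
rewrite S_INR, <- tech_pow_Rmult.
assert (0 <= INR n * x * x) by (rewrite Rmult_assoc; apply Rmult_le_pos; [apply pos_INR | nra]).
apply Rle_trans with ((1 + x) * (1 + INR n * x)); [nra|].
apply Rmult_le_compat_l; lra.
Qed.

Lemma exp_le_1 (x : R) : x <= 0 -> exp x <= 1.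
Proof.
intros [Hx|Hx]; [|rewrite Hx, exp_0; lra].
rewrite <- exp_0. left. apply exp_increasing, Hx.
Qed.

Lemma exp_sub_1_le (x : R) : 0 <= x -> exp x - 1 <= x * exp x.
Proof.
intros Hx. generalize (exp_ineq1_le (- x)).
rewrite exp_Ropp. generalize (exp_pos x). intros Hpos H.
apply Rmult_le_compat_r with (r := exp x) in H; [|lra].
rewrite Rinv_l in H; lra.
Qed.

Lemma ln_le_sub_1 (t : R) : 0 < t -> ln t <= t - 1.
Proof.
intros Ht. rewrite <- (ln_exp (t - 1)). apply ln_le; [exact Ht|].
generalize (exp_ineq1_le (t - 1)). lra.
Qed.

Lemma ln_nonpos (t : R) : 0 < t -> t <= 1 -> ln t <= 0.
Proof. intros. rewrite <- ln_1. apply ln_le; assumption. Qed.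

Lemma ln_nonneg (t : R) : 1 <= t -> 0 <= ln t.
Proof. intros. rewrite <- ln_1. apply ln_le; lra. Qed.

Lemma exp_opp_sub_pow_bounds (n : nat) (t : R) : (0 < n)%nat -> 0 <= t <= INR n ->
  0 <= exp (- t) - (1 - t / INR n) ^ n <= t ^ 2 * exp (- t) / INR n.
Proof.
intros Hn Ht.
assert (HN : 1 <= INR n) by (apply (le_INR 1); lia).
set (s := t / INR n).
assert (Hs : 0 <= s <= 1).
{ unfold s. split; [apply Rdiv_le_0_compat; lra|].
  apply Rmult_le_reg_r with (INR n); [lra|]. unfold Rdiv. rewrite Rmult_assoc, Rinv_l; lra. }
assert (Hns : INR n * s = t) by (unfold s; field; lra).
assert (Hlow : (1 - s) ^ n <= exp (- t)).
{ rewrite <- Hns, Ropp_mult_distr_r, <- exp_pow_nat.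
  apply pow_incr. generalize (exp_ineq1_le (- s)). lra. }
assert (Hup : (1 + s) ^ n <= exp t).
{ rewrite <- Hns, <- exp_pow_nat.
  apply pow_incr. generalize (exp_ineq1_le s). lra. }
(* (1 - s)^n (1 + s)^n = (1 - s^2)^n >= 1 - n s^2 = 1 - t s *)
assert (Hprod : 1 - t * s <= (1 - s) ^ n * exp t).
{ apply Rle_trans with ((1 - s) ^ n * (1 + s) ^ n).
  - rewrite <- Rpow_mult_distr.
    replace ((1 - s) * (1 + s)) with (1 + - s ^ 2) by ring.
    apply Rle_trans with (1 + INR n * - s ^ 2); [rewrite <- Hns; right; ring|].
    apply Bernoulli_ineq. nra.
  - apply Rmult_le_compat_l; [apply pow_le; lra | exact Hup]. }
assert (Hexp : exp (- t) * exp t = 1) by (rewrite <- exp_plus, Rplus_opp_l; apply exp_0).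
assert (Hpos := exp_pos (- t)).
split; [lra|].
replace (t ^ 2 * exp (- t) / INR n) with (exp (- t) * (t * s)) by (unfold s; field; lra).
replace (exp (- t) - (1 - s) ^ n) with (exp (- t) * (1 - (1 - s) ^ n * exp t))
  by (transitivity (exp (- t) - (1 - s) ^ n * (exp (- t) * exp t)); [ring | rewrite Hexp; ring]).
apply Rmult_le_compat_l; lra.
Qed.

Lemma is_RInt_primitive (F f : R -> R) (a b : R) :
  (forall t, Rmin a b <= t <= Rmax a b -> is_derive F t (f t)) ->
  (forall t, Rmin a b <= t <= Rmax a b -> ex_derive f t) ->
  is_RInt f a b (F b - F a).
Proof.
intros HF Hf. apply (is_RInt_derive (V := R_CompleteNormedModule) F f a b HF).
intros t Ht. apply (ex_derive_continuous (K := R_AbsRing) (V := R_NormedModule)), Hf, Ht.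
Qed.

Lemma ex_RInt_of_ex_derive (f : R -> R) (a b : R) :
  (forall t, Rmin a b <= t <= Rmax a b -> ex_derive f t) -> ex_RInt f a b.
Proof.
intros Hf. apply (ex_RInt_continuous (V := R_CompleteNormedModule)).
intros t Ht. apply (ex_derive_continuous (K := R_AbsRing) (V := R_NormedModule)), Hf, Ht.
Qed.

Lemma RInt_plus_R (f g : R -> R) (a b : R) : ex_RInt f a b -> ex_RInt g a b ->
  RInt (fun t => f t + g t) a b = RInt f a b + RInt g a b.
Proof. intros. apply (RInt_plus (V := R_CompleteNormedModule)); assumption. Qed.

Lemma RInt_minus_R (f g : R -> R) (a b : R) : ex_RInt f a b -> ex_RInt g a b ->
  RInt (fun t => f t - g t) a b = RInt f a b - RInt g a b.
Proof. intros. apply (RInt_minus (V := R_CompleteNormedModule)); assumption. Qed.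

Lemma RInt_Chasles_R (f : R -> R) (a b c : R) : ex_RInt f a b -> ex_RInt f b c ->
  RInt f a b + RInt f b c = RInt f a c.
Proof. intros. apply (RInt_Chasles (V := R_CompleteNormedModule)); assumption. Qed.

Lemma RInt_swap_R (f : R -> R) (a b : R) : ex_RInt f a b -> RInt f b a = - RInt f a b.
Proof. intros H. rewrite <- (opp_RInt_swap (V := R_CompleteNormedModule) f a b H). reflexivity. Qed.

Lemma RInt_nonneg_le (f g : R -> R) (u v G : R) : u <= v -> ex_RInt f u v -> is_RInt g u v G ->
  (forall t, u < t < v -> 0 <= f t <= g t) -> 0 <= RInt f u v <= G.
Proof.
intros Huv Hf Hg H. split.
- apply RInt_ge_0; [exact Huv | exact Hf | intros t Ht; apply H, Ht].
- rewrite <- (is_RInt_unique g u v G Hg).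
  apply RInt_le; [exact Huv | exact Hf | exists G; exact Hg | intros t Ht; apply H, Ht].
Qed.

Lemma Rmin_pos_le (a b t : R) : 0 < a -> 0 < b -> Rmin a b <= t -> 0 < t.
Proof. intros Ha Hb Ht. generalize (Rmin_pos a b Ha Hb). lra. Qed.

Lemma filterlim_bounds {T : Type} {F : (T -> Prop) -> Prop} {FF : ProperFilter F}
  (h : T -> R) (l lo hi : R) : filterlim h F (locally l) ->
  (forall eta, 0 < eta -> F (fun x => lo - eta <= h x <= hi + eta)) -> lo <= l <= hi.
Proof.
intros Hl Hb. split; apply Rle_plus_epsilon; intros eta Heta.
- assert (lo - eta <= l); [|lra].
  apply (closed_filterlim_loc (FF := Proper_StrongProper F FF) h (fun y => lo - eta <= y));
    [exact Hl | | apply closed_ge].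
  apply (filter_imp (fun x => lo - eta <= h x <= hi + eta)); [intros x Hx; apply Hx | apply Hb, Heta].
- apply (closed_filterlim_loc (FF := Proper_StrongProper F FF) h (fun y => y <= hi + eta));
    [exact Hl | | apply closed_le].
  apply (filter_imp (fun x => lo - eta <= h x <= hi + eta)); [intros x Hx; apply Hx | apply Hb, Heta].
Qed.

Lemma ex_lim_RInt_dominated {F : (R -> Prop) -> Prop} {FF : ProperFilter F}
  (f G : R -> R) (D : R -> Prop) (c LG : R) :
  D c -> F D -> (forall u v, D u -> D v -> ex_RInt f u v) ->
  (forall u v, D u -> D v -> u <= v -> 0 <= RInt f u v <= G v - G u) ->
  filterlim G F (locally LG) ->
  exists L, filterlim (fun u => RInt f c u) F (locally L).
Proof.
intros Dc FD Hint Hbnd HG.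
assert (Hdiff : forall u v, D u -> D v -> Rabs (RInt f u v) <= Rabs (G v - G u)).
{ intros u v Du Dv. destruct (Rle_lt_dec u v) as [Huv|Hvu].
  - destruct (Hbnd u v Du Dv Huv). rewrite !Rabs_pos_eq; lra.
  - rewrite RInt_swap_R, Rabs_Ropp by (apply Hint; assumption).
    destruct (Hbnd v u Dv Du (Rlt_le _ _ Hvu)).
    rewrite Rabs_pos_eq, Rabs_left1; lra. }
apply (filterlim_locally_cauchy (U := R_CompleteSpace)). intros eps.
exists (fun u => D u /\ ball LG (pos_div_2 eps) (G u)). split.
- apply filter_and; [exact FD | apply (proj1 (filterlim_locally _ _) HG)].
- intros u v [Du Gu] [Dv Gv]. change (Rabs (RInt f c v - RInt f c u) < eps).
  rewrite <- (RInt_Chasles_R f c u v), Rplus_minus_l by (apply Hint; assumption).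
  eapply Rle_lt_trans; [apply Hdiff; assumption|].
  change (Rabs (G u - LG) < eps / 2) in Gu. change (Rabs (G v - LG) < eps / 2) in Gv.
  replace (G v - G u) with ((G v - LG) - (G u - LG)) by ring.
  eapply Rle_lt_trans; [apply Rabs_triang|]. rewrite Rabs_Ropp. lra.
Qed.

Lemma filterlim_RInt_of_endpoints {Fa Fb : (R -> Prop) -> Prop} {FFa : Filter Fa} {FFb : Filter Fb}
  (f : R -> R) (Da Db : R -> Prop) (c La Lb : R) :
  Fa Da -> Fb Db -> (forall u, Da u \/ Db u -> ex_RInt f c u) ->
  filterlim (fun a => RInt f c a) Fa (locally La) ->
  filterlim (fun b => RInt f c b) Fb (locally Lb) ->
  filterlim (fun ab => RInt f (fst ab) (snd ab)) (filter_prod Fa Fb) (locally (Lb - La)).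
Proof.
intros FDa FDb Hint HLa HLb. apply filterlim_locally. intros eps.
apply (Filter_prod _ _ _ (fun a => Da a /\ ball La (pos_div_2 eps) (RInt f c a))
                         (fun b => Db b /\ ball Lb (pos_div_2 eps) (RInt f c b))).
- apply filter_and; [exact FDa | apply (proj1 (filterlim_locally _ _) HLa)].
- apply filter_and; [exact FDb | apply (proj1 (filterlim_locally _ _) HLb)].
- intros a b [Da' Ha] [Db' Hb]. change (Rabs (RInt f a b - (Lb - La)) < eps).
  change (Rabs (RInt f c a - La) < eps / 2) in Ha. change (Rabs (RInt f c b - Lb) < eps / 2) in Hb.
  assert (Hca := Hint a (or_introl Da')). assert (Hcb := Hint b (or_intror Db')).
  rewrite <- (RInt_Chasles_R f a c b), (RInt_swap_R f c a)
    by first [assumption | apply ex_RInt_swap; assumption].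
  replace (- RInt f c a + RInt f c b - (Lb - La)) with ((RInt f c b - Lb) - (RInt f c a - La)) by ring.
  eapply Rle_lt_trans; [apply Rabs_triang|]. rewrite Rabs_Ropp. lra.
Qed.

Lemma is_RInt_gen_of_filterlim {Fa Fb : (R -> Prop) -> Prop} {FFa : Filter Fa} {FFb : Filter Fb}
  (f : R -> R) (l : R) :
  filter_prod Fa Fb (fun ab => ex_RInt f (fst ab) (snd ab)) ->
  filterlim (fun ab => RInt f (fst ab) (snd ab)) (filter_prod Fa Fb) (locally l) ->
  is_RInt_gen f Fa Fb l.
Proof.
intros Hex Hl. apply (filterlimi_lim_ext_loc (fun ab => RInt f (fst ab) (snd ab))); [|exact Hl].
apply (filter_imp _ _ (fun ab H => RInt_correct (V := R_CompleteNormedModule) f _ _ H) Hex).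
Qed.

(** * Gamma near 0 *)

Definition gamma_integrand (e t : R) : R := Rpower t (e - 1) * exp (- t).

(* With N = m + 1 this is (1 - (1 - t/N)^N) / t, written as a geometric sum so that it is a
   polynomial in t; its integral over [0, N] is the harmonic number H_N. *)
Definition harmonic_kernel (m : nat) (t : R) : R :=
  / INR (S m) * sum_f_R0 (fun k => (1 - t / INR (S m)) ^ k) m.

Lemma Rpower_pred_mul (t e : R) : 0 < t -> Rpower t (e - 1) * t = Rpower t e.
Proof.
intros Ht. unfold Rpower. rewrite <- (exp_ln t) at 2 by exact Ht.
rewrite <- exp_plus. f_equal. ring.
Qed.

Lemma Rpower_1_l (x : R) : Rpower 1 x = 1.
Proof. unfold Rpower. rewrite ln_1, Rmult_0_r. apply exp_0. Qed.

Lemma INR_S_ge_1 (m : nat) : 1 <= INR (S m).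
Proof. rewrite S_INR. generalize (pos_INR m). lra. Qed.

Lemma gamma_integrand_le_rpow (e t : R) : 0 < t -> 0 <= gamma_integrand e t <= Rpower t (e - 1).
Proof.
intros Ht. unfold gamma_integrand.
assert (0 < Rpower t (e - 1)) by apply exp_pos.
assert (0 < exp (- t) <= 1) by (split; [apply exp_pos | apply exp_le_1; lra]).
nra.
Qed.

Lemma gamma_integrand_le_exp (e t : R) : e <= 1 -> 1 <= t -> 0 <= gamma_integrand e t <= exp (- t).
Proof.
intros He Ht. unfold gamma_integrand.
assert (0 < exp (- t)) by apply exp_pos.
assert (0 < Rpower t (e - 1) <= 1).
{ split; [apply exp_pos|]. apply exp_le_1.
  assert (0 <= ln t) by (apply ln_nonneg, Ht). nra. }
nra.
Qed.

Lemma ex_RInt_gamma_integrand (e a b : R) : 0 < a -> 0 < b -> ex_RInt (gamma_integrand e) a b.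
Proof.
intros Ha Hb. apply ex_RInt_of_ex_derive. intros t [Ht _].
assert (0 < t) by exact (Rmin_pos_le a b t Ha Hb Ht).
unfold gamma_integrand, Rpower. auto_derive. lra.
Qed.

Lemma is_RInt_rpow_pred (e u v : R) : 0 < e -> 0 < u -> 0 < v ->
  is_RInt (fun t => Rpower t (e - 1)) u v (Rpower v e / e - Rpower u e / e).
Proof.
intros He Hu Hv. apply (is_RInt_primitive (fun t => Rpower t e / e)).
- intros t [Ht _]. assert (0 < t) by exact (Rmin_pos_le u v t Hu Hv Ht).
  assert (Hp := Rpower_pred_mul t e H). unfold Rpower in *.
  auto_derive; [lra|]. rewrite <- Hp. field. lra.
- intros t [Ht _]. assert (0 < t) by exact (Rmin_pos_le u v t Hu Hv Ht).
  unfold Rpower. auto_derive. lra.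
Qed.

Lemma is_RInt_exp_opp (u v : R) : is_RInt (fun t => exp (- t)) u v (- exp (- v) - - exp (- u)).
Proof.
apply (is_RInt_primitive (fun t => - exp (- t))).
- intros t _. auto_derive; [exact I | ring].
- intros t _. auto_derive. exact I.
Qed.

Lemma Rpower_lim_at_right_0 (e : R) : 0 < e -> filterlim (fun a => Rpower a e) (at_right 0) (locally 0).
Proof.
intros He. apply filterlim_locally. intros eps.
exists (mkposreal _ (exp_pos (ln eps / e))). intros a Ha Ha0.
change (Rabs (a - 0) < exp (ln eps / e)) in Ha. rewrite Rminus_0_r, Rabs_pos_eq in Ha by lra.
change (Rabs (Rpower a e - 0) < eps). rewrite Rminus_0_r, Rabs_pos_eq by (left; apply exp_pos).
unfold Rpower. rewrite <- (exp_ln eps) by apply cond_pos. apply exp_increasing.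
apply ln_increasing in Ha; [|exact Ha0]. rewrite ln_exp in Ha.
apply Rmult_lt_reg_r with (/ e); [apply Rinv_0_lt_compat, He|].
replace (e * ln a * / e) with (ln a) by (field; lra). exact Ha.
Qed.

Lemma exp_opp_lim_p_infty : filterlim (fun b => - exp (- b)) (Rbar_locally p_infty) (locally 0).
Proof.
apply filterlim_locally. intros eps. exists (- ln eps). intros b Hb.
change (Rabs (- exp (- b) - 0) < eps). rewrite Rminus_0_r, Rabs_Ropp, Rabs_pos_eq by (left; apply exp_pos).
rewrite <- (exp_ln eps) by apply cond_pos. apply exp_increasing. lra.
Qed.

Lemma filterlim_RInt_Gamma (e : R) : 0 < e <= 1 ->
  filterlim (fun ab => RInt (gamma_integrand e) (fst ab) (snd ab))
    (filter_prod (at_right 0) (Rbar_locally p_infty)) (locally (Gamma e)).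
Proof.
intros He.
assert (Hright : at_right 0 (fun a => 0 < a)) by (exists (mkposreal 1 Rlt_0_1); intros a _ Ha; exact Ha).
assert (Hinfty : Rbar_locally p_infty (fun b => 1 <= b)) by (exists 1; intros b Hb; lra).
destruct (ex_lim_RInt_dominated (F := at_right 0) (gamma_integrand e) (fun t => Rpower t e / e)
  (fun t => 0 < t) 1 (0 / e) Rlt_0_1 Hright) as [La HLa].
{ intros u v Hu Hv. apply ex_RInt_gamma_integrand; assumption. }
{ intros u v Hu Hv Huv. apply (RInt_nonneg_le _ (fun t => Rpower t (e - 1))); [exact Huv | |
    apply is_RInt_rpow_pred; lra | intros t Ht; apply gamma_integrand_le_rpow; lra].
  apply ex_RInt_gamma_integrand; assumption. }
{ apply (filterlim_comp _ _ _ (fun a => Rpower a e) (fun y => y / e) _ (locally 0)).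
  - apply Rpower_lim_at_right_0; lra.
  - apply (filterlim_scal_l (K := R_AbsRing) (V := R_NormedModule) 0 (/ e)). }
destruct (ex_lim_RInt_dominated (F := Rbar_locally p_infty) (gamma_integrand e)
  (fun t => - exp (- t)) (fun t => 1 <= t) 1 0 (Rle_refl 1) Hinfty) as [Lb HLb].
{ intros u v Hu Hv. apply ex_RInt_gamma_integrand; lra. }
{ intros u v Hu Hv Huv. apply (RInt_nonneg_le _ (fun t => exp (- t))); [exact Huv | |
    apply is_RInt_exp_opp | intros t Ht; apply gamma_integrand_le_exp; lra].
  apply ex_RInt_gamma_integrand; lra. }
{ exact exp_opp_lim_p_infty. }
assert (Hlim := filterlim_RInt_of_endpoints (gamma_integrand e) (fun a => 0 < a) (fun b => 1 <= b)
  1 La Lb Hright Hinfty ltac:(intros u [Hu|Hu]; apply ex_RInt_gamma_integrand; lra) HLa HLb).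
replace (Gamma e) with (Lb - La); [exact Hlim|].
symmetry. apply is_RInt_gen_unique, is_RInt_gen_of_filterlim; [|exact Hlim].
apply (Filter_prod _ _ _ _ _ Hright Hinfty). intros a b Ha Hb. apply ex_RInt_gamma_integrand; simpl; lra.
Qed.

Section Truncation.

Variables (m : nat) (e : R).
Hypothesis He : 0 < e <= 1.
Let N := INR (S m).

Let N_ge_1 : 1 <= N.
Proof. apply INR_S_ge_1. Qed.

Let div_N_bounds (t : R) : 0 <= t <= N -> 0 <= t / N <= 1.
Proof.
intros Ht. assert (HN := N_ge_1). split; [apply Rdiv_le_0_compat; lra|].
apply Rmult_le_reg_r with N; [lra|]. unfold Rdiv. rewrite Rmult_assoc, Rinv_l; lra.
Qed.

Lemma harmonic_kernel_mul (t : R) : t * harmonic_kernel m t = 1 - (1 - t / N) ^ S m.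
Proof.
unfold harmonic_kernel. fold N. assert (HN := N_ge_1).
rewrite <- Rmult_assoc.
replace (t * / N) with (- (1 - t / N - 1)) by (field; lra).
rewrite Ropp_mult_distr_l_reverse, Rmult_comm, GP_finite, Nat.add_1_r. ring.
Qed.

Lemma harmonic_kernel_bounds (t : R) : 0 < t <= N -> 0 <= harmonic_kernel m t <= 1.
Proof.
intros Ht. assert (HN := N_ge_1). assert (Hs := div_N_bounds t ltac:(split; lra)).
assert (Hpow : (1 - t / N) ^ S m <= 1) by (rewrite <- (pow1 (S m)) at 2; apply pow_incr; split; lra).
assert (Hbern : 1 - t <= (1 - t / N) ^ S m).
{ replace (1 - t / N) with (1 + - (t / N)) by ring.
  replace (1 - t) with (1 + N * - (t / N)) by (field; lra). apply Bernoulli_ineq. lra. }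
assert (Hmul := harmonic_kernel_mul t).
split; apply Rmult_le_reg_l with t; lra.
Qed.

Lemma is_RInt_harmonic_kernel : is_RInt (harmonic_kernel m) 0 N (sum_f_R0 (fun k => / INR (S k)) m).
Proof.
assert (HN := N_ge_1).
assert (Hpow : forall k, is_RInt (fun t => (1 - t / N) ^ k) 0 N (N / INR (S k))).
{ intros k. assert (Hk := INR_S_ge_1 k).
  set (F := fun t => - (N / INR (S k)) * (1 - t / N) ^ S k).
  replace (N / INR (S k)) with (F N - F 0).
  - apply is_RInt_primitive; intros t _; unfold F.
    + auto_derive; [exact I|].
      change (match k with 0%nat => 1 | S _ => INR k + 1 end) with (INR (S k)).
      replace (1 + - (t * / N)) with (1 - t / N) by (field; lra). field. lra.
    + auto_derive. exact I.
  - unfold F. replace (1 - N / N) with 0 by (field; lra).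
    replace (1 - 0 / N) with 1 by (field; lra). rewrite pow1, pow_i by lia. ring. }
assert (Hsum : forall j, is_RInt (fun t => sum_f_R0 (fun k => (1 - t / N) ^ k) j) 0 N
                                  (N * sum_f_R0 (fun k => / INR (S k)) j)).
{ induction j as [|j IH].
  - replace (N * sum_f_R0 (fun k => / INR (S k)) 0) with (N / INR 1) by (simpl; field). apply Hpow.
  - replace (N * sum_f_R0 (fun k => / INR (S k)) (S j))
      with (plus (N * sum_f_R0 (fun k => / INR (S k)) j) (N / INR (S (S j))))
      by (simpl; unfold plus; simpl; field; generalize (INR_S_ge_1 (S j)); simpl; lra).
    apply (is_RInt_plus (V := R_NormedModule)); [exact IH | apply Hpow]. }
replace (sum_f_R0 (fun k => / INR (S k)) m) with (scal (/ N) (N * sum_f_R0 (fun k => / INR (S k)) m))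
  by (unfold scal; simpl; unfold mult; simpl; field; lra).
apply (is_RInt_scal (V := R_NormedModule)), Hsum.
Qed.

Lemma ex_RInt_harmonic_kernel (u v : R) : 0 <= u <= v -> v <= N -> ex_RInt (harmonic_kernel m) u v.
Proof.
intros Huv HvN. assert (Hall : ex_RInt (harmonic_kernel m) 0 N) by (eexists; apply is_RInt_harmonic_kernel).
apply (ex_RInt_Chasles_2 (V := R_CompleteNormedModule) _ 0); [lra|].
apply (ex_RInt_Chasles_1 (V := R_CompleteNormedModule) _ _ _ N); [lra | exact Hall].
Qed.

Lemma head_integrand_bounds (t : R) : 0 < t <= 1 ->
  0 <= gamma_integrand e t - Rpower t (e - 1) + harmonic_kernel m t <= - e * ln t + / N.
Proof.
intros Ht. assert (HN := N_ge_1). unfold gamma_integrand.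
set (P := Rpower t (e - 1)). set (u := exp (- t)). set (y := (1 - t / N) ^ S m).
assert (Hq := harmonic_kernel_mul t). fold N y in Hq.
assert (HPt := Rpower_pred_mul t e (proj1 Ht)). fold P in HPt.
assert (Hl := ln_nonpos t (proj1 Ht) (proj2 Ht)).
assert (Hte : Rpower t e <= 1) by (apply exp_le_1; nra).
assert (Hte2 : 1 - Rpower t e <= - e * ln t) by (generalize (exp_ineq1_le (e * ln t)); unfold Rpower; lra).
assert (Hu : 0 <= 1 - u <= t).
{ unfold u. split; [generalize (exp_le_1 (- t) ltac:(lra)) | generalize (exp_ineq1_le (- t))]; lra. }
assert (Huy := exp_opp_sub_pow_bounds (S m) t ltac:(lia) ltac:(fold N; split; lra)). fold N u y in Huy.
assert (Huy2 : u - y <= t * / N).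
{ apply Rle_trans with (t ^ 2 * u / N); [lra|]. unfold Rdiv. apply Rmult_le_compat_r.
  - left. apply Rinv_0_lt_compat. lra.
  - assert (0 < u) by apply exp_pos. simpl. nra. }
assert (Heq : t * (P * u - P + harmonic_kernel m t) = (1 - Rpower t e) * (1 - u) + (u - y))
  by (rewrite Rmult_plus_distr_l, Hq, <- HPt; ring).
assert (A1 : 0 <= (1 - Rpower t e) * (1 - u)) by (apply Rmult_le_pos; lra).
assert (A2 : (1 - Rpower t e) * (1 - u) <= (- e * ln t) * t) by (apply Rmult_le_compat; lra).
assert (Hlow : t * 0 <= t * (P * u - P + harmonic_kernel m t)) by (rewrite Heq; lra).
assert (Hup : t * (P * u - P + harmonic_kernel m t) <= t * (- e * ln t + / N)) by (rewrite Heq; nra).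
split; apply Rmult_le_reg_l with t; lra.
Qed.

Lemma middle_integrand_bounds (t : R) : 1 <= t <= N ->
  0 <= gamma_integrand e t + harmonic_kernel m t - / t <= (e + / N) * (t * exp (- t)).
Proof.
intros Ht. assert (HN := N_ge_1). unfold gamma_integrand.
set (P := Rpower t (e - 1)). set (u := exp (- t)). set (y := (1 - t / N) ^ S m).
assert (Ht0 : 0 < t) by lra.
assert (Hq := harmonic_kernel_mul t). fold N y in Hq.
assert (HPt := Rpower_pred_mul t e Ht0). fold P in HPt.
assert (Hl := ln_nonneg t (proj1 Ht)).
assert (Hl2 := ln_le_sub_1 t Ht0).
assert (Hte : Rpower t e - 1 <= e * ln t * Rpower t e) by (apply exp_sub_1_le; nra).
assert (Hte1 : 1 <= Rpower t e) by (generalize (exp_ineq1_le (e * ln t)); unfold Rpower; nra).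
assert (Hte2 : Rpower t e <= t).
{ unfold Rpower. rewrite <- (exp_ln t) at 2 by exact Ht0.
  destruct (Req_dec (e * ln t) (ln t)) as [E|E]; [rewrite E; lra|].
  left. apply exp_increasing. nra. }
assert (Hu0 : 0 < u) by apply exp_pos.
assert (Huy := exp_opp_sub_pow_bounds (S m) t ltac:(lia) ltac:(fold N; split; lra)). fold N u y in Huy.
assert (Heq : t * (P * u + harmonic_kernel m t - / t) = (Rpower t e - 1) * u + (u - y))
  by (unfold Rminus; rewrite !Rmult_plus_distr_l, Hq, <- HPt; field; lra).
assert (B1 : (Rpower t e - 1) * u <= e * t * t * u).
{ apply Rmult_le_compat_r; [lra|]. apply Rle_trans with (e * ln t * Rpower t e); [exact Hte|].
  assert (0 <= e * ln t) by nra. apply Rle_trans with (e * ln t * t); [apply Rmult_le_compat_l; lra|].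
  apply Rmult_le_compat_r; nra. }
assert (Hlow : t * 0 <= t * (P * u + harmonic_kernel m t - / t)).
{ rewrite Heq, Rmult_0_r. apply Rplus_le_le_0_compat; [apply Rmult_le_pos|]; lra. }
assert (Hup : t * (P * u + harmonic_kernel m t - / t) <= t * ((e + / N) * (t * u))).
{ rewrite Heq. replace (t * ((e + / N) * (t * u))) with (e * t * t * u + t ^ 2 * u / N) by (field; lra).
  lra. }
split; apply Rmult_le_reg_l with t; lra.
Qed.

Lemma RInt_head_bound (a : R) : 0 < a <= 1 ->
  0 <= RInt (fun t => gamma_integrand e t - Rpower t (e - 1) + harmonic_kernel m t) a 1 <= e + / N.
Proof.
intros Ha. assert (HN := N_ge_1).
assert (Hprim : is_RInt (fun t => - e * ln t + / N) a 1
   ((fun t => - e * (t * ln t - t) + t / N) 1 - (fun t => - e * (t * ln t - t) + t / N) a)).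
{ apply (is_RInt_primitive (fun t => - e * (t * ln t - t) + t / N)); intros t [Ht _];
    assert (0 < t) by exact (Rmin_pos_le a 1 t (proj1 Ha) Rlt_0_1 Ht).
  - auto_derive; [lra|]. field. lra.
  - auto_derive. lra. }
assert (Hex : ex_RInt (fun t => gamma_integrand e t - Rpower t (e - 1) + harmonic_kernel m t) a 1).
{ apply (ex_RInt_plus (V := R_NormedModule)); [apply (ex_RInt_minus (V := R_NormedModule))|].
  - apply ex_RInt_gamma_integrand; lra.
  - eexists. apply is_RInt_rpow_pred; lra.
  - apply ex_RInt_harmonic_kernel; fold N; try split; lra. }
destruct (RInt_nonneg_le _ _ a 1 _ (proj2 Ha) Hex Hprim) as [L U].
{ intros t Ht. apply head_integrand_bounds. lra. }
split; [exact L|]. eapply Rle_trans; [exact U|]. simpl. rewrite ln_1.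
assert (a * ln a <= 0) by (assert (ln a <= 0) by (apply ln_nonpos; lra); nra).
assert (0 <= a / N) by (apply Rdiv_le_0_compat; lra).
unfold Rdiv. nra.
Qed.

Lemma RInt_middle_bound :
  0 <= RInt (fun t => gamma_integrand e t + harmonic_kernel m t - / t) 1 N <= e + / N.
Proof.
assert (HN := N_ge_1).
assert (Hprim : is_RInt (fun t => (e + / N) * (t * exp (- t))) 1 N
   ((fun t => (e + / N) * (- (t + 1) * exp (- t))) N - (fun t => (e + / N) * (- (t + 1) * exp (- t))) 1)).
{ apply (is_RInt_primitive (fun t => (e + / N) * (- (t + 1) * exp (- t))));
    intros t _; auto_derive; [exact I | ring | exact I]. }
assert (Hex : ex_RInt (fun t => gamma_integrand e t + harmonic_kernel m t - / t) 1 N).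
{ apply (ex_RInt_minus (V := R_NormedModule)); [apply (ex_RInt_plus (V := R_NormedModule))|].
  - apply ex_RInt_gamma_integrand; lra.
  - apply ex_RInt_harmonic_kernel; fold N; try split; lra.
  - apply ex_RInt_of_ex_derive. intros t [Ht _].
    assert (0 < t) by exact (Rmin_pos_le 1 N t Rlt_0_1 ltac:(lra) Ht). auto_derive. lra. }
destruct (RInt_nonneg_le _ _ 1 N _ HN Hex Hprim) as [L U].
{ intros t Ht. apply middle_integrand_bounds. lra. }
split; [exact L|]. eapply Rle_trans; [exact U|]. simpl.
assert (0 < / N) by (apply Rinv_0_lt_compat; lra).
assert (0 <= (N + 1) * exp (- N)) by (generalize (exp_pos (- N)); nra).
assert (exp (- (1)) <= / 2).
{ rewrite exp_Ropp. apply Rinv_le_contravar; [lra|]. generalize (exp_ineq1_le 1). lra. }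
replace (1 + 1) with 2 by ring. nra.
Qed.

Lemma RInt_tail_bound (b : R) : N <= b -> 0 <= RInt (gamma_integrand e) N b <= / N.
Proof.
intros Hb. assert (HN := N_ge_1).
destruct (RInt_nonneg_le _ _ N b _ Hb (ex_RInt_gamma_integrand e N b ltac:(lra) ltac:(lra))
  (is_RInt_exp_opp N b)) as [L U].
{ intros t Ht. apply gamma_integrand_le_exp; lra. }
split; [exact L|].
assert (exp (- N) <= / N).
{ rewrite exp_Ropp. apply Rinv_le_contravar; [lra|]. generalize (exp_ineq1_le N). lra. }
generalize (exp_pos (- b)). lra.
Qed.

Lemma RInt_kernel_head_bound (a : R) : 0 < a <= 1 -> 0 <= RInt (harmonic_kernel m) 0 a <= a.
Proof.
intros Ha. assert (HN := N_ge_1).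
assert (Hprim : is_RInt (fun _ => 1) 0 a (a - 0)).
{ apply (is_RInt_primitive (fun t => t)); intros t _; auto_derive; [exact I | ring | exact I]. }
destruct (RInt_nonneg_le _ _ 0 a _ ltac:(lra)
  (ex_RInt_harmonic_kernel 0 a ltac:(split; lra) ltac:(fold N; lra)) Hprim) as [L U].
{ intros t Ht. apply harmonic_kernel_bounds. lra. }
lra.
Qed.

(* Write H_N, ln N and 1/e - a^e/e as integrals of the kernel, of 1/t and of t^(e-1), split
   everything at a, 1 and N, and regroup the integrands piece by piece. *)
Lemma truncation_bound (a b : R) : 0 < a <= 1 -> N <= b ->
  0 <= RInt (gamma_integrand e) a b - (/ e - Rpower a e / e)
       + sum_f_R0 (fun k => / INR (S k)) m - ln N <= 2 * e + 3 / N + a.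
Proof.
intros Ha Hb. assert (HN := N_ge_1).
assert (Hf : forall u v, 0 < u -> 0 < v -> ex_RInt (gamma_integrand e) u v)
  by (intros; apply ex_RInt_gamma_integrand; assumption).
assert (Hq : forall u v, 0 <= u <= v -> v <= N -> ex_RInt (harmonic_kernel m) u v)
  by (intros; apply ex_RInt_harmonic_kernel; assumption).
assert (Hp : is_RInt (fun t => Rpower t (e - 1)) a 1 (/ e - Rpower a e / e)).
{ replace (/ e) with (Rpower 1 e / e) by (rewrite Rpower_1_l; field; lra).
  apply is_RInt_rpow_pred; lra. }
assert (Hi : is_RInt (fun t => / t) 1 N (ln N - ln 1)).
{ apply (is_RInt_primitive ln); intros t [Ht _];
    assert (0 < t) by exact (Rmin_pos_le 1 N t Rlt_0_1 ltac:(lra) Ht); auto_derive; lra. }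
rewrite ln_1, Rminus_0_r in Hi.
rewrite <- (is_RInt_unique _ _ _ _ Hp), <- (is_RInt_unique _ _ _ _ Hi),
  <- (is_RInt_unique _ _ _ _ is_RInt_harmonic_kernel).
fold N.
rewrite <- (RInt_Chasles_R (gamma_integrand e) a N b), <- (RInt_Chasles_R (gamma_integrand e) a 1 N),
  <- (RInt_Chasles_R (harmonic_kernel m) 0 a N), <- (RInt_Chasles_R (harmonic_kernel m) a 1 N)
  by first [apply Hf; lra | apply Hq; lra].
assert (H1 := RInt_head_bound a Ha). assert (H2 := RInt_middle_bound).
assert (H3 := RInt_tail_bound b Hb). assert (H4 := RInt_kernel_head_bound a Ha).
rewrite RInt_plus_R, RInt_minus_R in H1 by first [apply Hf; lra | apply Hq; lra | eexists; exact Hp |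
  apply (ex_RInt_minus (V := R_NormedModule)); [apply Hf; lra | eexists; exact Hp]].
rewrite RInt_minus_R, RInt_plus_R in H2 by first [apply Hf; lra | apply Hq; lra | eexists; exact Hi |
  apply (ex_RInt_plus (V := R_NormedModule)); [apply Hf; lra | apply Hq; lra]].
change (RInt Rinv 1 N) with (RInt (fun t => / t) 1 N) in H2.
unfold Rdiv. lra.
Qed.

End Truncation.

(** * Euler's constant *)

Definition harmonic_log_gap (n : nat) : R := sum_n_m (fun k => / INR k) 1 n - ln (INR n).

Lemma harmonic_log_gap_S (m : nat) :
  harmonic_log_gap (S m) = sum_f_R0 (fun k => / INR (S k)) m - ln (INR (S m)).
Proof. unfold harmonic_log_gap. rewrite <- sum_n_m_S, <- sum_n_Reals. reflexivity. Qed.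

Lemma Gamma_harmonic_bound (e : R) (m : nat) : 0 < e <= 1 ->
  0 <= Gamma e - / e + harmonic_log_gap (S m) <= 2 * e + 3 / INR (S m).
Proof.
intros He. rewrite harmonic_log_gap_S.
set (H := sum_f_R0 (fun k => / INR (S k)) m). set (N := INR (S m)).
enough (/ e - H + ln N <= Gamma e <= / e - H + ln N + (2 * e + 3 / N)) by lra.
apply (filterlim_bounds _ _ _ _ (filterlim_RInt_Gamma e He)). intros eta Heta.
assert (Hsmall : at_right 0 (fun a => Rpower a e < e * eta)).
{ apply (filter_imp (fun a => ball 0 (mkposreal _ (Rmult_lt_0_compat e eta (proj1 He) Heta)) (Rpower a e))).
  - intros a Ha. change (Rabs (Rpower a e - 0) < e * eta) in Ha.
    rewrite Rminus_0_r in Ha. generalize (Rle_abs (Rpower a e)). lra.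
  - apply (proj1 (filterlim_locally _ _) (Rpower_lim_at_right_0 e (proj1 He))). }
assert (Hnear : at_right 0 (fun a => 0 < a < Rmin 1 eta)).
{ exists (mkposreal _ (Rmin_pos 1 eta Rlt_0_1 Heta)). intros a Ha Ha0.
  change (Rabs (a - 0) < Rmin 1 eta) in Ha. rewrite Rminus_0_r, Rabs_pos_eq in Ha; lra. }
apply (Filter_prod _ _ _ _ _ (filter_and _ _ Hnear Hsmall) (ex_intro _ N (fun b Hb => Rlt_le _ _ Hb))).
intros a b [[Ha0 Ha1] Hae] Hb. simpl.
assert (Hmin := Rmin_l 1 eta). assert (Hmin' := Rmin_r 1 eta).
assert (Hae' : Rpower a e / e < eta).
{ apply Rmult_lt_reg_r with e; [lra|]. unfold Rdiv. rewrite Rmult_assoc, Rinv_l; lra. }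
assert (0 < Rpower a e / e) by (apply Rdiv_lt_0_compat; [apply exp_pos | lra]).
destruct (truncation_bound m e He a b ltac:(split; lra) Hb) as [L U]. fold H N in L, U.
split; lra.
Qed.

Lemma eventually_div_INR_lt (c eta : R) : 0 < eta -> eventually (fun m => c / INR (S m) < eta).
Proof.
intros Heta. destruct (proj2 (is_lim_seq_spec _ _) is_lim_seq_INR (c / eta)) as [M HM].
exists M. intros n Hn. specialize (HM n Hn). assert (HS := INR_S_ge_1 n). rewrite S_INR in *.
apply (Rmult_lt_reg_r (INR n + 1)); [lra|].
unfold Rdiv at 1. rewrite Rmult_assoc, Rinv_l, Rmult_1_r by lra.
replace c with (eta * (c / eta)) at 1 by (field; lra).
apply Rmult_lt_compat_l; lra.
Qed.

(* For every e, the N-th term lies in [1/e - Gamma e, 1/e - Gamma e + 2e + 3/N]. *)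
Lemma harmonic_log_gap_cvg : is_lim_seq harmonic_log_gap euler_gamma.
Proof.
assert (Hcauchy : ex_lim_seq_cauchy harmonic_log_gap).
{ intros eps. assert (Heps := cond_pos eps).
  set (e := Rmin 1 (eps / 8)).
  assert (He : 0 < e <= 1) by (split; [apply Rmin_pos; lra | apply Rmin_l]).
  assert (He8 : e <= eps / 8) by apply Rmin_r.
  destruct (eventually_div_INR_lt 3 (eps / 2) ltac:(lra)) as [M HM].
  exists (S M). intros [|n] [|n'] Hn Hn'; try lia.
  destruct (Gamma_harmonic_bound e n He). destruct (Gamma_harmonic_bound e n' He).
  assert (HM1 := HM n ltac:(lia)). assert (HM2 := HM n' ltac:(lia)).
  apply Rabs_def1; lra. }
destruct (proj2 (ex_lim_seq_cauchy_corr _) Hcauchy) as [l Hl].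
unfold euler_gamma. fold harmonic_log_gap. rewrite (is_lim_seq_unique _ _ Hl). exact Hl.
Qed.

Lemma Gamma_sub_inv_bounds (e : R) : 0 < e <= 1 -> 0 <= Gamma e - / e + euler_gamma <= 2 * e.
Proof.
intros He.
assert (Hlim : filterlim (fun n => Gamma e - / e + harmonic_log_gap n) eventually
                 (locally (Gamma e - / e + euler_gamma))).
{ apply (is_lim_seq_plus' (fun _ => Gamma e - / e) harmonic_log_gap);
    [apply is_lim_seq_const | exact harmonic_log_gap_cvg]. }
apply (filterlim_bounds _ _ _ _ Hlim). intros eta Heta.
destruct (eventually_div_INR_lt 3 eta Heta) as [M HM].
exists (S M). intros [|n] Hn; [lia|].
destruct (Gamma_harmonic_bound e n He). assert (HM1 := HM n ltac:(lia)). lra.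
Qed.

Lemma Gamma_sub_inv_lim : filterlim (fun e => Gamma e - / e) (at_right 0) (locally (- euler_gamma)).
Proof.
apply filterlim_locally. intros eps.
exists (mkposreal _ (Rmin_pos 1 (eps / 4) Rlt_0_1 ltac:(generalize (cond_pos eps); lra))).
intros e He He0. change (Rabs (e - 0) < Rmin 1 (eps / 4)) in He.
rewrite Rminus_0_r, Rabs_pos_eq in He by lra.
assert (Hmin := Rmin_l 1 (eps / 4)). assert (Hmin' := Rmin_r 1 (eps / 4)).
destruct (Gamma_sub_inv_bounds e ltac:(lra)).
change (Rabs (Gamma e - / e - - euler_gamma) < eps).
rewrite Rabs_pos_eq; lra.
Qed.

(** * The lambda function at infinity *)

Lemma is_series_telescoping (c : nat -> R) :
  is_lim_seq c 0 -> is_series (fun k => c k - c (S k)) (c O).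
Proof.
intros Hc.
assert (Hpartial : forall n, sum_n (fun k => c k - c (S k)) n = c O - c (S n)).
{ induction n as [|n IH]; [rewrite sum_O; reflexivity|].
  rewrite sum_Sn, IH. unfold plus. simpl. ring. }
assert (Hlim : is_lim_seq (fun n => c O - c (S n)) (c O - 0)).
{ apply (is_lim_seq_minus' (fun _ => c O)); [apply is_lim_seq_const | apply (is_lim_seq_incr_1 c 0), Hc]. }
rewrite Rminus_0_r in Hlim. apply (is_lim_seq_ext _ _ _ (fun n => eq_sym (Hpartial n)) Hlim).
Qed.

Lemma is_lim_seq_inv_2k_plus_9 : is_lim_seq (fun k => / (2 * INR k + 9)) 0.
Proof.
apply is_lim_seq_spec. intros eps.
destruct (eventually_div_INR_lt 1 eps (cond_pos eps)) as [M HM]. exists M. intros k Hk.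
specialize (HM k Hk). assert (HS := INR_S_ge_1 k). rewrite S_INR in *.
rewrite Rminus_0_r, Rabs_pos_eq by (left; apply Rinv_0_lt_compat; lra).
eapply Rle_lt_trans; [|exact HM]. unfold Rdiv. rewrite Rmult_1_l.
apply Rinv_le_contravar; [lra|]. generalize (pos_INR k). lra.
Qed.

(* For x >= 2: (2k+11)^(-x) <= 11^(-x) (11/(2k+11))^2 <= 11^(-x) 121/((2k+9)(2k+11)). *)
Lemma lambda_tail_term_le (x : R) (k : nat) : 2 <= x ->
  / Rpower (2 * INR (5 + k) + 1) x
    <= 121 / 2 * / Rpower 11 x * (/ (2 * INR k + 9) - / (2 * INR (S k) + 9)).
Proof.
intros Hx. rewrite plus_INR, (S_INR k). assert (Hk := pos_INR k).
set (r := (2 * INR k + 11) / 11).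
assert (Hr : 1 <= r) by (unfold r; lra).
replace (2 * (INR 5 + INR k) + 1) with (11 * r) by (unfold r; simpl; field).
rewrite <- Rpower_mult_distr by lra. rewrite Rinv_mult.
assert (H11 : Rpower 11 x <> 0) by apply Rgt_not_eq, exp_pos.
replace (121 / 2 * / Rpower 11 x * (/ (2 * INR k + 9) - / (2 * (INR k + 1) + 9)))
  with (/ Rpower 11 x * (121 / ((2 * INR k + 9) * (2 * INR k + 11))))
  by (field; repeat split; try exact H11; lra).
apply Rmult_le_compat_l; [left; apply Rinv_0_lt_compat, exp_pos|].
apply Rle_trans with (/ Rpower r 2).
- apply Rinv_le_contravar; [apply exp_pos | apply Rle_Rpower; assumption].
- replace (Rpower r 2) with (r ^ 2) by (rewrite <- Rpower_pow by lra; simpl; f_equal; ring).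
  unfold r. replace (/ ((2 * INR k + 11) / 11) ^ 2) with (121 / ((2 * INR k + 11) * (2 * INR k + 11)))
    by (field; lra).
  unfold Rdiv. apply Rmult_le_compat_l; [lra|]. apply Rinv_le_contravar; nra.
Qed.

Lemma dirichlet_lambda_expansion (x : R) : 2 <= x -> exists T,
  dirichlet_lambda x = 1 + / Rpower 3 x + / Rpower 5 x + / Rpower 7 x + / Rpower 9 x + T
  /\ 0 <= T <= 121 / 18 * / Rpower 11 x.
Proof.
intros Hx.
set (a := fun n => / Rpower (2 * INR n + 1) x).
set (b := fun k => 121 / 2 * / Rpower 11 x * (/ (2 * INR k + 9) - / (2 * INR (S k) + 9))).
assert (Hb : is_series b (121 / 2 * / Rpower 11 x * / 9)).
{ replace (121 / 2 * / Rpower 11 x * / 9)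
    with (scal (121 / 2 * / Rpower 11 x) ((fun k => / (2 * INR k + 9)) O))
    by (unfold scal; simpl; unfold mult; simpl; f_equal; f_equal; ring).
  apply (is_series_scal_l (K := R_AbsRing) (V := R_NormedModule)).
  apply (is_series_telescoping (fun k => / (2 * INR k + 9))), is_lim_seq_inv_2k_plus_9. }
assert (Htail : forall k, 0 <= a (5 + k)%nat <= b k).
{ intros k. split; [left; apply Rinv_0_lt_compat, exp_pos | apply lambda_tail_term_le, Hx]. }
assert (Ex_tail : ex_series (fun k => a (5 + k)%nat)).
{ apply (ex_series_le (K := R_AbsRing) (V := R_CompleteNormedModule) _ b); [|eexists; exact Hb].
  intros k. change (norm (a (5 + k)%nat)) with (Rabs (a (5 + k)%nat)).
  rewrite Rabs_pos_eq; apply Htail. }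
exists (Series (fun k => a (5 + k)%nat)). split.
- unfold dirichlet_lambda. fold a.
  rewrite (Series_incr_n a 5) by (try apply (ex_series_incr_n a 5); auto; lia).
  simpl pred. cbn [sum_f_R0]. unfold a. simpl INR.
  replace (2 * 0 + 1) with 1 by ring. replace (2 * 1 + 1) with 3 by ring.
  replace (2 * (1 + 1) + 1) with 5 by ring. replace (2 * (1 + 1 + 1) + 1) with 7 by ring.
  replace (2 * (1 + 1 + 1 + 1) + 1) with 9 by ring.
  rewrite Rpower_1_l, Rinv_1. ring.
- split.
  + apply Rle_trans with (Series (fun k => 0 * a (5 + k)%nat)); [right; rewrite Series_scal_l; ring|].
    apply Series_le; [intros k; rewrite Rmult_0_l; split; [lra | apply Htail] | exact Ex_tail].
  + apply Rle_trans with (Series b); [apply Series_le; [exact Htail | eexists; exact Hb]|].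
    rewrite (is_series_unique _ _ Hb). right. field. apply Rgt_not_eq, exp_pos.
Qed.

(* The hypotheses are the comparisons between the monomials in 3^-x, 5^-x, 7^-x, 11^-x
   (taking A, B, C, E for these) needed to bound every error term by a multiple of E / A^2. *)
Lemma inv_expansion_error (A B C E R K : R) :
  0 < A -> 0 < B -> 0 < C -> 0 < E -> 0 <= R -> 0 <= K -> R <= K * E ->
  B * C <= A * E -> A * B <= E -> C * C <= A * E -> A * C <= E -> A * A * A <= E ->
  B <= A -> C <= B -> A * A <= B -> E <= B -> B * B * B <= A * A * E ->
  Rabs (/ (A + B + C + A * A + R) - (/ A - B / (A * A) - C / (A * A) + B * B / (A * A * A) - 1))
    <= (5 * K + 11) * (E / (A * A)).
Proof.
intros HA HB HC HE HR HK HRE HBC HAB HCC HAC HAAA HBA HCB HAAB HEB HBBB.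
set (S' := B + C + A * A). set (S := S' + R).
set (X := S * S' - B * B). set (Y := S * (B * B)).
assert (Id : / (A + B + C + A * A + R) - (/ A - B / (A * A) - C / (A * A) + B * B / (A * A * A) - 1)
             = (- R / A + X / (A * A) - Y / (A * (A * A))) / (A + S)).
{ unfold X, Y, S, S'. field. split; nra. }
rewrite Id.
assert (HX : 0 <= X /\ X <= (8 + 3 * K) * (A * E)).
{ unfold X, S, S'. split; [nra|].
  assert (R * (B + C + A * A) <= K * E * (3 * B)) by (apply Rmult_le_compat; nra).
  nra. }
assert (HY : 0 <= Y /\ Y <= (3 + K) * (A * A * E)).
{ unfold Y, S, S'. split; [nra|].
  assert ((B + C + A * A + R) * (B * B) <= (3 + K) * B * (B * B)) by (apply Rmult_le_compat_r; nra).
  nra. }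
destruct HX as [HX0 HX1]. destruct HY as [HY0 HY1].
assert (HAA : 0 < A * A) by nra. assert (HA3 : 0 < A * (A * A)) by nra.
assert (HS : A <= A + S) by (unfold S, S'; nra).
assert (Hnum : Rabs (- R / A + X / (A * A) - Y / (A * (A * A))) <= R / A + X / (A * A) + Y / (A * (A * A))).
{ assert (0 <= R / A) by (apply Rdiv_le_0_compat; lra).
  assert (0 <= X / (A * A)) by (apply Rdiv_le_0_compat; lra).
  assert (0 <= Y / (A * (A * A))) by (apply Rdiv_le_0_compat; lra).
  apply Rabs_le. unfold Rdiv in *. lra. }
unfold Rdiv at 1. rewrite Rabs_mult, (Rabs_pos_eq (/ (A + S))) by (left; apply Rinv_0_lt_compat; lra).
apply Rle_trans with ((R / A + X / (A * A) + Y / (A * (A * A))) * / A).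
{ apply Rmult_le_compat; [apply Rabs_pos | left; apply Rinv_0_lt_compat; lra | exact Hnum |].
  apply Rinv_le_contravar; lra. }
replace ((R / A + X / (A * A) + Y / (A * (A * A))) * / A)
  with (R / (A * A) + X / (A * (A * A)) + Y / ((A * A) * (A * A))) by (field; lra).
replace ((5 * K + 11) * (E / (A * A)))
  with (K * E / (A * A) + (8 + 3 * K) * (A * E) / (A * (A * A)) + (3 + K) * (A * A * E) / ((A * A) * (A * A)))
  by (field; lra).
unfold Rdiv. apply Rplus_le_compat; [apply Rplus_le_compat|];
  apply Rmult_le_compat_r; try (left; apply Rinv_0_lt_compat; nra); lra.
Qed.

Lemma Rinv_Rpower_anti (a b x : R) : 0 < a <= b -> 0 <= x -> / Rpower b x <= / Rpower a x.
Proof. intros. apply Rinv_le_contravar; [apply exp_pos | apply Rle_Rpower_l; assumption]. Qed.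

Lemma Rpower_div (a b x : R) : 0 < a -> 0 < b -> Rpower (a / b) x = Rpower a x / Rpower b x.
Proof.
intros Ha Hb. unfold Rpower, Rdiv. rewrite ln_mult, ln_Rinv, Rmult_plus_distr_l, exp_plus by
  (try apply Rinv_0_lt_compat; assumption).
rewrite <- exp_Ropp. f_equal. f_equal. ring.
Qed.

Lemma inv_lambda_sub_1_error (x T : R) : 0 <= x -> 0 <= T <= 121 / 18 * / Rpower 11 x ->
  Rabs (/ (/ Rpower 3 x + / Rpower 5 x + / Rpower 7 x + / Rpower 9 x + T)
        - (Rpower 3 x - Rpower (9 / 5) x - Rpower (9 / 7) x + Rpower (27 / 25) x - 1))
  <= (5 * (121 / 18) + 11) * Rpower (9 / 11) x.
Proof.
intros Hx HT.
set (A := / Rpower 3 x). set (B := / Rpower 5 x). set (C := / Rpower 7 x). set (E := / Rpower 11 x).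
assert (Hpos : forall n, 0 < / Rpower n x) by (intros; apply Rinv_0_lt_compat, exp_pos).
assert (Hmul : forall a b, 0 < a -> 0 < b -> / Rpower a x * / Rpower b x = / Rpower (a * b) x)
  by (intros; rewrite <- Rinv_mult, Rpower_mult_distr; auto).
assert (H9 : / Rpower 9 x = A * A) by (unfold A; rewrite Hmul by lra; do 2 f_equal; ring).
assert (Hcmp : forall a b, 0 < a <= b -> / Rpower b x <= / Rpower a x)
  by (intros; apply Rinv_Rpower_anti; assumption).
assert (HBC : B * C <= A * E) by (unfold A, B, C, E; rewrite !Hmul by lra; apply Hcmp; lra).
assert (HAB : A * B <= E) by (unfold A, B, E; rewrite !Hmul by lra; apply Hcmp; lra).
assert (HCC : C * C <= A * E) by (unfold A, C, E; rewrite !Hmul by lra; apply Hcmp; lra).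
assert (HAC : A * C <= E) by (unfold A, C, E; rewrite !Hmul by lra; apply Hcmp; lra).
assert (HAAA : A * A * A <= E) by (unfold A, E; rewrite !Hmul by lra; apply Hcmp; lra).
assert (HBA : B <= A) by (apply Hcmp; lra).
assert (HCB : C <= B) by (apply Hcmp; lra).
assert (HAAB : A * A <= B) by (unfold A, B; rewrite !Hmul by lra; apply Hcmp; lra).
assert (HEB : E <= B) by (apply Hcmp; lra).
assert (HBBB : B * B * B <= A * A * E) by (unfold A, B, E; rewrite !Hmul by lra; apply Hcmp; lra).
assert (Hne : forall n, Rpower n x <> 0) by (intros; apply Rgt_not_eq, exp_pos).
assert (P3 : Rpower 3 x = / A) by (unfold A; rewrite Rinv_inv; reflexivity).
assert (P95 : Rpower (9 / 5) x = B / (A * A)).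
{ rewrite Rpower_div, <- H9 by lra. unfold B. field. split; apply Hne. }
assert (P97 : Rpower (9 / 7) x = C / (A * A)).
{ rewrite Rpower_div, <- H9 by lra. unfold C. field. split; apply Hne. }
assert (P2725 : Rpower (27 / 25) x = B * B / (A * A * A)).
{ rewrite Rpower_div by lra. unfold A, B. rewrite !Hmul by lra.
  replace (3 * 3 * 3) with 27 by ring. replace (5 * 5) with 25 by ring. field. split; apply Hne. }
assert (P911 : Rpower (9 / 11) x = E / (A * A)).
{ rewrite Rpower_div, <- H9 by lra. unfold E. field. split; apply Hne. }
rewrite H9, P3, P95, P97, P2725, P911.
destruct HT. apply inv_expansion_error; first [apply Hpos | assumption | lra].
Qed.

Lemma Rpower_lim_p_infty (q : R) : 0 < q < 1 -> is_lim (fun x => Rpower q x) p_infty 0.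
Proof.
intros Hq. assert (Hl : ln q < 0) by (rewrite <- ln_1; apply ln_increasing; lra).
apply is_lim_spec. intros eps. exists (ln eps / ln q). intros x Hx.
rewrite Rminus_0_r, Rabs_pos_eq by (left; apply exp_pos).
unfold Rpower. rewrite <- (exp_ln eps) by apply cond_pos. apply exp_increasing.
apply Rmult_lt_reg_r with (/ - ln q); [apply Rinv_0_lt_compat; lra|].
replace (x * ln q * / - ln q) with (- x) by (field; lra).
replace (ln eps * / - ln q) with (- (ln eps / ln q)) by (field; lra). lra.
Qed.

Lemma Rinv_Rpower (a x : R) : 0 < a -> / Rpower a x = Rpower (/ a) x.
Proof. intros Ha. unfold Rpower. rewrite ln_Rinv, <- exp_Ropp by exact Ha. f_equal. ring. Qed.

Lemma lambda_sub_1_lim :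
  filterlim (fun x => dirichlet_lambda x - 1) (Rbar_locally p_infty) (at_right 0).
Proof.
intros P [eps HP].
assert (Hlim := Rpower_lim_p_infty (/ 3) ltac:(split; lra)).
apply is_lim_spec in Hlim.
destruct (Hlim (mkposreal (eps / (4 + 121 / 18))
                 ltac:(apply Rdiv_lt_0_compat; [apply cond_pos | lra]))) as [M HM].
exists (Rmax 2 M). intros x Hx.
assert (H2 := Rmax_l 2 M). assert (HMx := Rmax_r 2 M).
destruct (dirichlet_lambda_expansion x ltac:(lra)) as [T [Hlam HT]].
assert (Hpos : forall n, 0 < / Rpower n x) by (intros; apply Rinv_0_lt_compat, exp_pos).
assert (Hcmp : forall a, 3 <= a -> / Rpower a x <= / Rpower 3 x) by (intros; apply Rinv_Rpower_anti; lra).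
assert (H3 := HM x ltac:(lra)). simpl in H3. rewrite Rminus_0_r, <- Rinv_Rpower, Rabs_pos_eq in H3 by
  (try apply Rlt_le, Hpos; lra).
apply HP.
- change (Rabs (dirichlet_lambda x - 1 - 0) < eps). rewrite Hlam, Rminus_0_r.
  assert (H11 := Hcmp 11 ltac:(lra)). assert (H5 := Hcmp 5 ltac:(lra)).
  assert (H7 := Hcmp 7 ltac:(lra)). assert (H9 := Hcmp 9 ltac:(lra)).
  assert (Hsum : / Rpower 3 x + / Rpower 5 x + / Rpower 7 x + / Rpower 9 x + T
                 <= (4 + 121 / 18) * / Rpower 3 x) by lra.
  rewrite Rabs_pos_eq by (generalize (Hpos 3) (Hpos 5) (Hpos 7) (Hpos 9); lra).
  replace (1 + / Rpower 3 x + / Rpower 5 x + / Rpower 7 x + / Rpower 9 x + T - 1)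
    with (/ Rpower 3 x + / Rpower 5 x + / Rpower 7 x + / Rpower 9 x + T) by ring.
  eapply Rle_lt_trans; [exact Hsum|].
  replace (pos eps) with ((4 + 121 / 18) * (eps / (4 + 121 / 18))) by (field; lra).
  apply Rmult_lt_compat_l; lra.
- rewrite Hlam. generalize (Hpos 3) (Hpos 5) (Hpos 7) (Hpos 9). lra.
Qed.

Lemma inv_lambda_sub_1_asymptotics :
  is_lim (fun x => / (dirichlet_lambda x - 1)
                   - (Rpower 3 x - Rpower (9 / 5) x - Rpower (9 / 7) x + Rpower (27 / 25) x - 1))
    p_infty 0.
Proof.
set (K := 5 * (121 / 18) + 11).
assert (Hq := Rpower_lim_p_infty (9 / 11) ltac:(split; lra)).
assert (Hup := is_lim_scal_l _ K _ _ Hq). assert (Hlow := is_lim_scal_l _ (- K) _ _ Hq).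
simpl in Hup, Hlow. rewrite Rmult_0_r in Hup, Hlow.
refine (is_lim_le_le_loc _ _ _ _ _ _ Hlow Hup). exists 2. intros x Hx. simpl.
destruct (dirichlet_lambda_expansion x ltac:(lra)) as [T [Hlam HT]].
replace (dirichlet_lambda x - 1) with (/ Rpower 3 x + / Rpower 5 x + / Rpower 7 x + / Rpower 9 x + T)
  by (rewrite Hlam; ring).
rewrite Ropp_mult_distr_l_reverse. apply Rabs_le_between, inv_lambda_sub_1_error; [lra | exact HT].
Qed.

Theorem mainTheorem12 :
  is_lim
    (fun x : R =>
       Gamma (dirichlet_lambda x - 1) - Rpower 3 x + Rpower (9 / 5) x
       + Rpower (9 / 7) x - Rpower (27 / 25) x + 1)
    p_infty (- euler_gamma).
Proof.
apply (is_lim_ext (fun x => (Gamma (dirichlet_lambda x - 1) - / (dirichlet_lambda x - 1))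
  + (/ (dirichlet_lambda x - 1)
     - (Rpower 3 x - Rpower (9 / 5) x - Rpower (9 / 7) x + Rpower (27 / 25) x - 1)))).
{ intros x. ring. }
rewrite <- (Rplus_0_r (- euler_gamma)).
apply is_lim_plus'; [|exact inv_lambda_sub_1_asymptotics].
exact (filterlim_comp _ _ _ (fun x => dirichlet_lambda x - 1) (fun e => Gamma e - / e) _ _ _
  lambda_sub_1_lim Gamma_sub_inv_lim).
Qed.
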